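(* GDD message passing always converges: for any input, the sequence of dual objective values $g(\boldsymbol\lambda^{(k)})$, $k=1,2,\dots$, computed after each sweep of GDD converges (to a finite limit).
   Context: Let $\mathcal{V}=\{1,\dots,n\}$; each variable $x_i$ takes values in a finite set, $\mathbf{x}_s=(x_i)_{i\in s}$ for $s\subseteq\mathcal{V}$. Let $\mathcal{C}$ be a collection of subsets of $\mathcal{V}$ with real potentials $\theta_c(\mathbf{x}_c)$. Let $\mathcal{C}'$ be a finite collection of subsets of $\mathcal{V}$ and for each $c\in\mathcal{C}'$ let $\mathcal{S}(c)$ be a collection of subsets of $c$ (possibly containing $c$), with $\mathcal{S}(c)\setminus\{c\}\neq\emptyset$ and $\mathcal{C}'\cup\bigcup_{c}\mathcal{S}(c)\supseteq\mathcal{C}$; put $\mathcal{T}=\mathcal{C}'\cup\bigcup_{c\in\mathcal{C}'}\mathcal{S}(c)$. Messages are reals $\lambda_{c\to s}(\mathbf{x}_s)$, $c\in\mathcal{C}'$, $s\in\mathcal{S}(c)\setminus\{c\}$. For $t\in\mathcal{T}$: $\hat\theta_t=\mathbb{1}(t\in\mathcal{C})\theta_t$; $\gamma_t(\mathbf{x}_t)=\mathbb{1}(t\in\mathcal{C}')\sum_{\hat s\in\mathcal{S}(t)\setminus\{t\}}\lambda_{t\to\hat s}(\mathbf{x}_{\hat s})$; $\lambda_t(\mathbf{x}_t)=\sum_{c'\in\mathcal{C}':\,t\in\mathcal{S}(c')\setminus\{c'\}}\lambda_{c'\to t}(\mathbf{x}_t)$; beliefs $b_t=\hat\theta_t+\lambda_t-\gamma_t$;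 dual objective $g(\boldsymbol\lambda)=\sum_{t\in\mathcal{T}}\max_{\mathbf{x}_t}b_t(\mathbf{x}_t)$. For $c\in\mathcal{C}'$, $s\in\mathcal{S}(c)\setminus\{c\}$, $\lambda_s^{-c}(\mathbf{x}_s)=\sum_{\hat c\in\mathcal{C}':\,\hat c\ne c,\ s\in\mathcal{S}(\hat c)\setminus\{\hat c\}}\lambda_{\hat c\to s}(\mathbf{x}_s)$. GDD message passing: start with all messages equal to $0$; in each sweep, go through the clusters $c\in\mathcal{C}'$ one at a time and replace, for all $s\in\mathcal{S}(c)\setminus\{c\}$ and $\mathbf{x}_s$ simultaneously, $\lambda_{c\to s}(\mathbf{x}_s)$ by $\lambda^*_{c\to s}(\mathbf{x}_s)=-\hat\theta_s(\mathbf{x}_s)+\gamma_s(\mathbf{x}_s)-\lambda_s^{-c}(\mathbf{x}_s)+\frac{1}{|\mathcal{S}(c)\setminus\{c\}|}\max_{\mathbf{x}_{c\setminus s}}[\hat\theta_c(\mathbf{x}_c)+\lambda_c(\mathbf{x}_c)+\sum_{\hat s\in\mathcal{S}(c)\setminus\{c\}}(\hat\theta_{\hat s}-\gamma_{\hat s}+\lambda^{-c}_{\hat s})(\mathbf{x}_{\hat s})]$ (all quantities evaluated at the current messages); after each sweep $k$ record $g(\boldsymbol\lambda^{(k)})$. *)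

From HB Require Import structures.
From mathcomp Require Import all_boot all_order all_algebra.
From mathcomp Require Import all_classical all_reals all_analysis.
Set Implicit Arguments. Unset Strict Implicit. Unset Printing Implicit Defensive.
Import Order.TTheory GRing.Theory Num.Theory.
Local Open Scope ring_scope.

Section GDD.
Variables (R : realType) (n : nat) (D : 'I_n -> finType).

(* full assignments x = (x_i)_{i in V}; a function of x_s is represented as a
   function of the full assignment (it only ever depends on the coordinates in s) *)
Definition assign := {dffun forall i : 'I_n, D i}.

Definition agree (s : {set 'I_n}) (x y : assign) : bool :=
  [forall i in s, x i == y i].

(* max over all assignments (0 if there is none; never used in that case) *)
Definition maxX (f : assign -> R) : R :=
  if [pick x : assign] is Some x0 then \big[Num.max/f x0]_(y : assign) f y else 0.

(* max_{x_{c \ s}} f, as a function of x_s (f depends only on x_c) *)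
Definition maxOn (s : {set 'I_n}) (f : assign -> R) (x : assign) : R :=
  \big[Num.max/f x]_(y : assign | agree s x y) f y.

Variables (C Cp : {set {set 'I_n}}) (S : {set 'I_n} -> {set {set 'I_n}})
  (theta : {set 'I_n} -> assign -> R).

(* messages lam c s x = lambda_{c -> s}(x_s) *)
Definition msg := {set 'I_n} -> {set 'I_n} -> assign -> R.

Definition Sm (c : {set 'I_n}) := S c :\ c.
Definition Tset := Cp :|: \bigcup_(c in Cp) S c.

Definition thetah (t : {set 'I_n}) (x : assign) : R :=
  if t \in C then theta t x else 0.
Definition gammaf (lam : msg) (t : {set 'I_n}) (x : assign) : R :=
  if t \in Cp then \sum_(sh in Sm t) lam t sh x else 0.
Definition lamt (lam : msg) (t : {set 'I_n}) (x : assign) : R :=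
  \sum_(c' in Cp | t \in Sm c') lam c' t x.
Definition belief (lam : msg) (t : {set 'I_n}) (x : assign) : R :=
  thetah t x + lamt lam t x - gammaf lam t x.
Definition dual_obj (lam : msg) : R :=
  \sum_(t in Tset) maxX (belief lam t).
Definition lamminus (lam : msg) (c s : {set 'I_n}) (x : assign) : R :=
  \sum_(ch in Cp | (ch != c) && (s \in Sm ch)) lam ch s x.

Definition gdd_update (lam : msg) (c : {set 'I_n}) : msg :=
  fun c0 s x =>
    if (c0 == c) && (s \in Sm c) then
      - thetah s x + gammaf lam s x - lamminus lam c s x
      + (#|Sm c|%:R)^-1 *
        maxOn s (fun y => thetah c y + lamt lam c y
                   + \sum_(sh in Sm c) (thetah sh y - gammaf lam sh y + lamminus lam c sh y)) x
    else lam c0 s x.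

Definition gdd_sweep (ord : seq {set 'I_n}) (lam : msg) : msg :=
  foldl gdd_update lam ord.

Definition msg0 : msg := fun _ _ _ => 0.

Definition gdd_iter (ord : seq {set 'I_n}) (k : nat) : msg :=
  iter k (gdd_sweep ord) msg0.

End GDD.

From Pilot Require Import Defs.
From HB Require Import structures.
From mathcomp Require Import all_boot all_order all_algebra.
From mathcomp Require Import all_classical all_reals all_analysis.
From mathcomp Require Import ring.

Set Implicit Arguments.
Unset Strict Implicit.
Unset Printing Implicit Defensive.
Import Order.TTheory GRing.Theory Num.Theory numFieldNormedType.Exports.
Local Open Scope ring_scope.
Local Open Scope classical_set_scope.

(* Each GDD block update is an exact coordinate descent step on the dual
   objective g.  After updating the messages of a cluster c, the new beliefs
   of the subclusters s of c are equal shares (1/m) max_{x_{c\s}} F of the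
   pooled belief F = b_c + sum_s b_s, and the new belief of c is F minus these
   shares; hence the new terms max b_c + sum_s max b_s are at most max F,
   which is at most the old terms.  So g decreases along the iteration.  It is
   also bounded below: the messages cancel in sum_t b_t(x0), so
   g >= sum_t theta_t(x0) for any fixed assignment x0.  A nonincreasing
   sequence of reals bounded below converges. *)

Lemma sumr_inv_card (R : numFieldType) (T : finType) (A : {set T}) (r : R) :
  A != finset.set0 -> \sum_(s in A) #|A|%:R^-1 * r = r.
Proof.
move=> A_neq0; rewrite sumr_const -mulrnAl -[_ *+ _]mulr_natr mulVf ?mul1r //.
by rewrite pnatr_eq0 -lt0n card_gt0.
Qed.

Section MaxOverAssignments.
Variables (R : realType) (n : nat) (D : 'I_n -> finType).
Implicit Types (f g : assign D -> R) (s : {set 'I_n}).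

Lemma le_maxX f y : f y <= maxX f.
Proof.
rewrite /maxX; case: pickP => [x0 _|/(_ y)//].
exact: le_bigmax.
Qed.

Lemma maxX_le (x0 : assign D) f M : (forall y, f y <= M) -> maxX f <= M.
Proof.
move=> le_fM; rewrite /maxX; case: pickP => [x1 _|/(_ x0)//].
exact: bigmax_le.
Qed.

Lemma eq_maxX f g : f =1 g -> maxX f = maxX g.
Proof. by move=> fg; rewrite /maxX; case: pickP => // x1 _; rewrite fg; apply: eq_bigr. Qed.

Lemma le_maxOn s f x : f x <= maxOn s f x.
Proof. exact: bigmax_ge_id. Qed.

Lemma maxOn_le_maxX s f x : maxOn s f x <= maxX f.
Proof. by apply: bigmax_le => [|y _]; apply: le_maxX. Qed.

End MaxOverAssignments.

Section GDD.
Variables (R : realType) (n : nat) (D : 'I_n -> finType).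
Variables (C Cp : {set {set 'I_n}}) (S : {set 'I_n} -> {set {set 'I_n}})
  (theta : {set 'I_n} -> assign D -> R).
Local Notation A := (assign D).
Local Notation msg := (msg R D).
Local Notation Sm := (Sm S).
Local Notation T := (Tset Cp S).
Local Notation thetah := (thetah C theta).
Local Notation gammaf := (gammaf Cp S).
Local Notation lamt := (lamt Cp S).
Local Notation lamminus := (lamminus Cp S).
Local Notation belief := (belief C Cp S theta).
Local Notation g := (dual_obj C Cp S theta).
Local Notation update := (gdd_update C Cp S theta).

Lemma notin_Sm c : c \notin Sm c.
Proof. by rewrite !inE eqxx. Qed.

Lemma Sm_Tset c s : c \in Cp -> s \in Sm c -> s \in T.
Proof.
move=> cCp; rewrite finset.in_setD1 => /andP[_ sSc].
by rewrite finset.in_setU; apply/orP; right; apply/bigcupP; exists c.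
Qed.

Lemma lamtE (lam : msg) c s x : c \in Cp -> s \in Sm c ->
  lamt lam s x = lam c s x + lamminus lam c s x.
Proof.
move=> cCp sSc; rewrite /Defs.lamt (bigD1 c) /=; last by rewrite cCp sSc.
congr (_ + _); apply: eq_bigl => ch.
by case: (ch \in Cp); case: (ch == c); case: (s \in Sm ch).
Qed.

Section Update.
Variables (lam : msg) (c : {set 'I_n}).
Hypotheses (cCp : c \in Cp) (Sc_neq0 : Sm c != finset.set0).
Local Notation lam' := (update lam c).
Local Notation m := (#|Sm c|%:R : R).

Lemma update_other c0 s x : ~~ ((c0 == c) && (s \in Sm c)) -> lam' c0 s x = lam c0 s x.
Proof. by move=> h; rewrite /gdd_update (negbTE h). Qed.

Lemma lamminus_update s x : lamminus lam' c s x = lamminus lam c s x.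
Proof.
apply: eq_bigr => ch /andP[_ /andP[ch_neq_c _]].
by rewrite update_other // (negbTE ch_neq_c).
Qed.

Lemma gammaf_update t x : t != c -> gammaf lam' t x = gammaf lam t x.
Proof.
move=> t_neq_c; rewrite /Defs.gammaf; case: (t \in Cp) => //.
by apply: eq_bigr => sh _; rewrite update_other // (negbTE t_neq_c).
Qed.

Lemma lamt_update t x : t \notin Sm c -> lamt lam' t x = lamt lam t x.
Proof.
move=> tSc; apply: eq_bigr => ch _.
by rewrite update_other // negb_and (negbTE tSc) orbT.
Qed.

Lemma belief_update_other t x :
  t != c -> t \notin Sm c -> belief lam' t x = belief lam t x.
Proof. by move=> t_neq_c tSc; rewrite /Defs.belief gammaf_update // lamt_update. Qed.

Definition pooled (y : A) : R := thetah c y + lamt lam c y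
  + \sum_(sh in Sm c) (thetah sh y - gammaf lam sh y + lamminus lam c sh y).

Lemma pooledE y : pooled y = belief lam c y + \sum_(s in Sm c) belief lam s y.
Proof.
rewrite (eq_bigr (fun s => thetah s y - gammaf lam s y + lamminus lam c s y + lam c s y)).
  by rewrite big_split /= /Defs.belief /Defs.gammaf cCp /pooled; ring.
by move=> s sSc; rewrite /Defs.belief (lamtE lam y cCp sSc); ring.
Qed.

Lemma belief_update_sub s x : s \in Sm c -> belief lam' s x = m^-1 * maxOn s pooled x.
Proof.
move=> sSc; have s_neq_c : s != c by apply: contraTneq sSc => ->; exact: notin_Sm.
rewrite /Defs.belief gammaf_update // (lamtE lam' x cCp sSc) lamminus_update.
by rewrite /gdd_update eqxx sSc /= -/pooled; ring.
Qed.

Lemma belief_update_cluster y :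
  belief lam' c y = pooled y - \sum_(s in Sm c) m^-1 * maxOn s pooled y.
Proof.
rewrite /Defs.belief lamt_update ?notin_Sm // /Defs.gammaf cCp.
rewrite (eq_bigr (fun sh => m^-1 * maxOn sh pooled y
                   - (thetah sh y - gammaf lam sh y + lamminus lam c sh y))).
  by rewrite sumrB /pooled; ring.
by move=> sh shSc; rewrite /gdd_update eqxx shSc /=; ring.
Qed.

Section Assignment.
Variable x0 : A.

Lemma maxX_belief_update_le :
  maxX (belief lam' c) + \sum_(s in Sm c) maxX (belief lam' s) <= maxX pooled.
Proof.
have m_inv_ge0 : 0 <= m^-1 by rewrite invr_ge0 ler0n.
rewrite -[maxX pooled]add0r; apply: lerD.
  apply: (maxX_le x0) => y; rewrite belief_update_cluster subr_le0.
  rewrite -{1}(sumr_inv_card (pooled y) Sc_neq0); apply: ler_sum => s _.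
  by apply: ler_wpM2l => //; apply: le_maxOn.
rewrite -(sumr_inv_card (maxX pooled) Sc_neq0); apply: ler_sum => s sSc.
apply: (maxX_le x0) => x; rewrite belief_update_sub //.
by apply: ler_wpM2l => //; apply: maxOn_le_maxX.
Qed.

Lemma maxX_pooled_le :
  maxX pooled <= maxX (belief lam c) + \sum_(s in Sm c) maxX (belief lam s).
Proof.
apply: (maxX_le x0) => y; rewrite pooledE.
by apply: lerD; [|apply: ler_sum => s _]; apply: le_maxX.
Qed.

Lemma dual_obj_update_le : g lam' <= g lam.
Proof.
set U := c |: Sm c.
have UT : U \subset T.
  apply/fintype.subsetP => t; rewrite finset.in_setU1 => /predU1P[->|]; last exact: Sm_Tset.
  by rewrite finset.in_setU cCp.
have g_split (l : msg) : g l = \sum_(t in T :\: U) maxX (belief l t)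
    + (maxX (belief l c) + \sum_(s in Sm c) maxX (belief l s)).
  rewrite /dual_obj (big_setID U) /= (finset.setIidPr UT) big_setU1 ?notin_Sm //=.
  exact: addrC.
rewrite !g_split; apply: lerD.
  rewrite (eq_bigr (fun t => maxX (belief lam t))) ?lexx // => t.
  rewrite finset.in_setD finset.in_setU1 negb_or => /andP[/andP[t_neq_c tSc] _].
  by apply: eq_maxX => y; rewrite belief_update_other.
exact: le_trans maxX_belief_update_le maxX_pooled_le.
Qed.

End Assignment.
End Update.

Hypothesis Sm_neq0 : forall c, c \in Cp -> Sm c != finset.set0.

Lemma dual_obj_sweep_le (x0 : A) (ord : seq {set 'I_n}) (lam : msg) :
  {subset ord <= Cp} -> g (gdd_sweep C Cp S theta ord lam) <= g lam.
Proof.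
elim: ord lam => [|c ord IH] lam ord_sub //=.
have cCp : c \in Cp by apply: ord_sub; rewrite mem_head.
apply: le_trans (dual_obj_update_le lam cCp (Sm_neq0 cCp) x0).
by apply: IH => d d_ord; apply: ord_sub; rewrite in_cons d_ord orbT.
Qed.

(* Every message lambda_{c -> s} enters lamt at s and gammaf at c, both in T. *)
Lemma sum_lamt_gammaf (lam : msg) x :
  \sum_(t in T) lamt lam t x = \sum_(t in T) gammaf lam t x.
Proof.
rewrite /Defs.lamt (exchange_big_dep (fun c => c \in Cp)) /=; last by move=> t c _ /andP[].
rewrite /Defs.gammaf -big_mkcondr /=.
rewrite [RHS](eq_bigl (fun t => t \in Cp)); last first.
  by move=> t; case tCp: (t \in Cp); rewrite ?andbF // andbT finset.in_setU tCp.
apply: eq_bigr => c cCp; apply: eq_bigl => t.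
by rewrite cCp /=; case sSc: (t \in Sm c); rewrite ?andbF // andbT (Sm_Tset cCp sSc).
Qed.

Lemma sum_thetah_le_dual_obj (lam : msg) x :
  \sum_(t in T) thetah t x <= g lam.
Proof.
apply: le_trans (_ : \sum_(t in T) belief lam t x <= _); last first.
  by apply: ler_sum => t _; apply: le_maxX.
by rewrite /Defs.belief sumrB big_split /= sum_lamt_gammaf addrK.
Qed.

End GDD.

Theorem proposition3 (R : realType) (n : nat) (D : 'I_n -> finType)
  (C Cp : {set {set 'I_n}}) (S : {set 'I_n} -> {set {set 'I_n}})
  (theta : {set 'I_n} -> assign D -> R) (ord : seq {set 'I_n}) :
  (forall i : 'I_n, (0 < #|D i|)%N) ->
  (forall c, c \in C -> forall x y : assign D, agree c x y -> theta c x = theta c y) ->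
  (forall c, c \in Cp -> S c \subset powerset c) ->
  (forall c, c \in Cp -> Sm S c != finset.set0) ->
  C \subset Tset Cp S ->
  perm_eq ord (enum Cp) ->
  exists l : R,
    (fun k : nat => dual_obj C Cp S theta (gdd_iter C Cp S theta ord k.+1)) @ \oo --> l.
Proof.
move=> D_gt0 _ _ Sm_neq0 _ ord_Cp.
pose x0 : assign D := finfun (fun i => xchoose (card_gt0P (D_gt0 i))).
have ord_sub : {subset ord <= Cp} by move=> c; rewrite (perm_mem ord_Cp) mem_enum.
eexists; apply: nonincreasing_cvgn.
  apply/nonincreasing_seqP => k; rewrite /gdd_iter iterS.
  exact: (dual_obj_sweep_le C theta Sm_neq0 x0).
exists (\sum_(t in Tset Cp S) Defs.thetah C theta t x0) => _ [k _ <-].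
exact: sum_thetah_le_dual_obj.
Qed.
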